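(* Let $f:[0,1]\to[0,1]$ be a surjective continuous function. Then $f$ admits a splitting sequence if and only if $f^2=f\circ f$ admits a splitting sequence.
   Context: For a continuous surjective $g:[0,1]\to[0,1]$: a sequence $(T_n)_{n\in\mathbb N}$ of closed intervals $T_n\subsetneq[0,1]$ (possibly degenerate) is tight for $g$ if $g(T_{n+1})=T_n$ for every $n$ and $T_n$ is nondegenerate for all sufficiently large $n$. A tight sequence $(T_n)$, $T_n=[l_n,r_n]$, is a splitting sequence admitted by $g$ if there are an infinite set $N\subseteq\mathbb N$ and nondegenerate closed intervals $S_n\subseteq[0,1]$ ($n\in N$) with $S_n\cap T_n\subseteq\{l_n,r_n\}$ and $g(S_n)=g(T_n)$ for all $n\in N$. *)

From Stdlib Require Import Reals.
Open Scope R_scope.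

Definition Icc (a b : R) (x : R) : Prop := a <= x <= b.

Definition image_Icc_eq (g : R -> R) (a b c d : R) : Prop :=
  forall y, (exists x, Icc a b x /\ g x = y) <-> Icc c d y.

Definition cont01 (g : R -> R) : Prop :=
  forall x, Icc 0 1 x -> forall eps, 0 < eps ->
    exists delta, 0 < delta /\
      forall y, Icc 0 1 y -> Rabs (y - x) < delta -> Rabs (g y - g x) < eps.

Definition surj01 (g : R -> R) : Prop := image_Icc_eq g 0 1 0 1.

Definition proper_subinterval (l r : R) : Prop :=
  0 <= l /\ l <= r /\ r <= 1 /\ ~ (l = 0 /\ r = 1).

Definition tight (g : R -> R) (l r : nat -> R) : Prop :=
  (forall n, proper_subinterval (l n) (r n)) /\
  (forall n, image_Icc_eq g (l (S n)) (r (S n)) (l n) (r n)) /\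
  (exists N, forall n, (N <= n)%nat -> l n < r n).

Definition splitting_sequence (g : R -> R) (l r : nat -> R) : Prop :=
  tight g l r /\
  exists (Nset : nat -> Prop) (a b : nat -> R),
    (forall m, exists n, (m <= n)%nat /\ Nset n) /\
    (forall n, Nset n ->
       0 <= a n /\ a n < b n /\ b n <= 1 /\
       (forall x, Icc (a n) (b n) x -> Icc (l n) (r n) x -> x = l n \/ x = r n) /\
       (forall y, (exists x, Icc (a n) (b n) x /\ g x = y) <->
                  (exists x, Icc (l n) (r n) x /\ g x = y))).

Definition admits_splitting_sequence (g : R -> R) : Prop :=
  exists l r : nat -> R, splitting_sequence g l r.

(* Forward: infinitely many splitting indices of a tight sequence T_n for f share a parity p,
   and T_{2k+p} is then tight and splitting for f∘f, since f(S) = f(T) implies f²(S) = f²(T).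

   Backward: given a tight sequence T_n for f∘f, interleave intervals X_n ⊆ T_n and Y_n with
   f(X_{n+1}) = Y_n and f(Y_n) = X_n, taking for Y_n a minimal interval inside f(T_{n+1})
   mapped onto X_n, i.e. one whose interior avoids the two endpoint values of X_n.  Two
   minimal intervals over the same target either coincide or meet only at endpoints.  So if
   S splits T_{n+1} for f∘f, a minimal K ⊆ f(S) over X_n either splits Y_n for f, or equals
   Y_n; in the latter case Y_n ⊆ f(S) and an interval of S mapped onto Y_n splits X_{n+1}. *)

From Stdlib Require Import Reals Lra Lia Classical ClassicalEpsilon.
Open Scope R_scope.

Lemma image_ext (f g : R -> R) a b y : (forall x, Icc a b x -> f x = g x) ->
  (exists x, Icc a b x /\ f x = y) <-> (exists x, Icc a b x /\ g x = y).
Proof.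
  intros fg; split; intros [x [xab <-]]; exists x; split; auto.
  symmetry; auto.
Qed.

Lemma image_comp (f g : R -> R) a b c d y : image_Icc_eq f a b c d ->
  (exists x, Icc a b x /\ g (f x) = y) <-> (exists w, Icc c d w /\ g w = y).
Proof.
  intros img; split.
  - intros [x [xab <-]]. exists (f x); split; [apply img; now exists x | reflexivity].
  - intros [w [wcd <-]]. destruct (proj2 (img w) wcd) as [x [xab <-]]. now exists x.
Qed.

Lemma image_Icc_eq_01 f a b c d : surj01 f -> 0 <= a -> b <= 1 -> c <= d ->
  image_Icc_eq f a b c d -> 0 <= c /\ d <= 1.
Proof.
  intros f_surj a0 b1 cd img.
  assert (in01 : forall y, Icc c d y -> Icc 0 1 y).
  { intros y hy. destruct (proj2 (img y) hy) as [x [xab <-]].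
    apply f_surj. exists x; split; [unfold Icc in *; lra | reflexivity]. }
  destruct (in01 c), (in01 d); unfold Icc; lra.
Qed.

Lemma proper_subinterval_sub l r u v : proper_subinterval l r ->
  l <= u -> u <= v -> v <= r -> proper_subinterval u v.
Proof.
  unfold proper_subinterval; lra.
Qed.

Section IntermediateValues.

Variable h : R -> R.
Hypothesis h_cont : continuity h.

Lemma IVT_between a b y : a <= b -> (h a <= y <= h b \/ h b <= y <= h a) ->
  exists x, a <= x <= b /\ h x = y.
Proof.
  intros ab hy.
  assert (shifted_cont : continuity (fun x => h x - y)).
  { apply continuity_minus; [exact h_cont | apply continuity_const; now intros ? ?]. }
  destruct (IVT_cor _ a b shifted_cont ab) as [x [xab hx]]; [destruct hy; nra |].
  exists x; split; [exact xab | lra].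
Qed.

Lemma IVT_open a b y : a < b -> (h a < y < h b \/ h b < y < h a) ->
  exists x, a < x < b /\ h x = y.
Proof.
  intros ab hy.
  destruct (IVT_between a b y) as [x [xab hx]]; [lra | lra |].
  assert (x <> a) by (intros ->; lra).
  assert (x <> b) by (intros ->; lra).
  exists x; split; [lra | exact hx].
Qed.

Lemma image_Icc_interval a b : a <= b -> exists c d, c <= d /\ image_Icc_eq h a b c d.
Proof.
  intros ab.
  assert (cont_ab : forall x, a <= x <= b -> continuity_pt h x) by (intros; apply h_cont).
  destruct (continuity_ab_min h a b ab cont_ab) as [xm [h_min xm_ab]].
  destruct (continuity_ab_maj h a b ab cont_ab) as [xM [h_max xM_ab]].
  exists (h xm), (h xM); split; [now apply h_max |].
  intros y; unfold Icc; split.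
  - intros [x [xab <-]]. split; [apply h_min | apply h_max]; exact xab.
  - intros hy. destruct (Rle_dec xm xM).
    + destruct (IVT_between xm xM y) as [x [? ?]]; [lra | now left |].
      exists x; split; [lra | assumption].
    + destruct (IVT_between xM xm y) as [x [? ?]]; [lra | now right |].
      exists x; split; [lra | assumption].
Qed.

Lemma continuity_neq_near x c : h x <> c ->
  exists delta, 0 < delta /\ forall y, Rabs (y - x) < delta -> h y <> c.
Proof.
  intros hxc.
  destruct (h_cont x (Rabs (h x - c))) as [delta [delta_pos near]].
  { apply Rabs_pos_lt; lra. }
  exists delta; split; [exact delta_pos |].
  intros y yx hyc.
  destruct (Req_dec x y) as [<- | xy]; [contradiction |].
  specialize (near y (conj (conj I xy) yx)). simpl in near; unfold R_dist in near.
  rewrite hyc, Rabs_minus_sym in near. lra.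
Qed.

Lemma last_preimage a b c : a <= b -> h a = c ->
  exists s, a <= s <= b /\ h s = c /\ forall x, s < x <= b -> h x <> c.
Proof.
  intros ab hac.
  set (E := fun x => a <= x <= b /\ h x = c).
  destruct (completeness E) as [s [s_ub s_least]].
  - exists b; intros x [xab _]; lra.
  - exists a; split; [lra | exact hac].
  - assert (a_s : a <= s) by (apply s_ub; split; [lra | exact hac]).
    assert (s_b : s <= b) by (apply s_least; intros x [xab _]; lra).
    assert (hsc : h s = c).
    { apply NNPP; intros hsc.
      destruct (continuity_neq_near s c hsc) as [delta [delta_pos near]].
      enough (s <= s - delta) by lra.
      apply s_least; intros x [xab hxc].
      assert (x <= s) by (apply s_ub; split; assumption).
      apply Rnot_lt_le; intros xs.
      apply (near x); [rewrite Rabs_left1; lra | exact hxc]. }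
    exists s; split; [lra |]; split; [exact hsc |].
    intros x xsb hxc.
    assert (x <= s) by (apply s_ub; split; [lra | exact hxc]). lra.
Qed.

End IntermediateValues.

Lemma first_preimage h a b c : continuity h -> a <= b -> h b = c ->
  exists t, a <= t <= b /\ h t = c /\ forall x, a <= x < t -> h x <> c.
Proof.
  intros h_cont ab hbc.
  assert (reflected_cont : continuity (fun x => h (- x))).
  { apply (continuity_comp (opp_fct id) h); [apply continuity_opp, derivable_continuous, derivable_id | exact h_cont]. }
  destruct (last_preimage _ reflected_cont (- b) (- a) c) as [s [s_ab [hsc s_last]]];
    [lra | now rewrite Ropp_involutive |].
  exists (- s); split; [lra |]; split; [exact hsc |].
  intros x xt hxc. apply (s_last (- x)); [lra | now rewrite Ropp_involutive].
Qed.

Definition minimal_cover (h : R -> R) (c d s t : R) : Prop :=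
  s < t /\ ((h s = c /\ h t = d) \/ (h s = d /\ h t = c)) /\
  forall x, s < x < t -> h x <> c /\ h x <> d.

Lemma minimal_cover_sym h c d s t : minimal_cover h c d s t -> minimal_cover h d c s t.
Proof.
  intros [st [ends avoid]]. split; [exact st |]. split; [tauto |].
  intros x xst. destruct (avoid x xst); tauto.
Qed.

(* The interior of a minimal cover avoids both endpoint values, so neither cover can have an
   endpoint of the other strictly inside it. *)
Lemma minimal_covers_eq_or_touch h c d y1 y2 k1 k2 :
  minimal_cover h c d y1 y2 -> minimal_cover h c d k1 k2 ->
  (k1 = y1 /\ k2 = y2) \/ (forall x, Icc k1 k2 x -> Icc y1 y2 x -> x = y1 \/ x = y2).
Proof.
  intros y_cover k_cover.
  assert (ends : forall s t, minimal_cover h c d s t ->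
                   (h s = c \/ h s = d) /\ (h t = c \/ h t = d)).
  { intros s t [_ [ends _]]; tauto. }
  assert (outside : forall s t z, minimal_cover h c d s t ->
                      (h z = c \/ h z = d) -> ~ (s < z < t)).
  { intros s t z [_ [_ avoid]] hz zst. destruct (avoid z zst); tauto. }
  destruct (ends _ _ y_cover) as [hy1 hy2], (ends _ _ k_cover) as [hk1 hk2].
  pose proof (outside _ _ _ y_cover hk1). pose proof (outside _ _ _ y_cover hk2).
  pose proof (outside _ _ _ k_cover hy1). pose proof (outside _ _ _ k_cover hy2).
  destruct (classic (exists x, Icc k1 k2 x /\ y1 < x < y2)) as [[x [xk xy]] | no_overlap].
  - left. unfold Icc in xk. lra.
  - right. intros x xk xy. apply NNPP; intros not_end.
    apply no_overlap. exists x; split; [exact xk |]. unfold Icc in xy. lra.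
Qed.

Section MinimalCovers.

Variable h : R -> R.
Hypothesis h_cont : continuity h.

Lemma minimal_cover_image c d s t : c < d -> minimal_cover h c d s t ->
  image_Icc_eq h s t c d.
Proof.
  intros cd [st [ends avoid]].
  assert (never_between : forall a b y, s <= a -> a < b -> b <= t -> (y = c \/ y = d) ->
                            ~ (h a < y < h b \/ h b < y < h a)).
  { intros a b y sa ab bt ycd between.
    destruct (IVT_open h h_cont a b y ab between) as [z [zab hz]].
    destruct (avoid z) as [zc zd]; [lra |]. destruct ycd; subst; contradiction. }
  intros y; unfold Icc; split.
  - intros [x [xst <-]].
    destruct (Req_dec x s) as [-> | xs]; [destruct ends; lra |].
    destruct (Req_dec x t) as [-> | xt]; [destruct ends; lra |].
    destruct ends as [[hs ht] | [hs ht]]; split; apply Rnot_lt_le; intros hx.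
    + apply (never_between x t c); lra.
    + apply (never_between s x d); lra.
    + apply (never_between s x c); lra.
    + apply (never_between x t d); lra.
  - intros hy. destruct (IVT_between h h_cont s t y) as [x [xst hx]];
      [lra | destruct ends; [left | right]; lra |].
    now exists x.
Qed.

Lemma minimal_cover_exists_lt p q c d : p < q -> h p = c -> h q = d -> c <> d ->
  exists s t, p <= s /\ t <= q /\ minimal_cover h c d s t.
Proof.
  intros pq hpc hqd cd.
  destruct (last_preimage h h_cont p q c) as [s [s_pq [hsc s_last]]]; [lra | exact hpc |].
  assert (s <> q) by (intros ->; congruence).
  destruct (first_preimage h s q d h_cont) as [t [t_sq [htd t_first]]]; [lra | exact hqd |].
  assert (s <> t) by (intros <-; congruence).
  exists s, t; split; [lra |]; split; [lra |].
  split; [lra |]; split; [now left |].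
  intros x xst; split; [apply s_last | apply t_first]; lra.
Qed.

Lemma minimal_cover_in_image a b c d u v :
  image_Icc_eq h a b c d -> c <= u -> u < v -> v <= d ->
  exists s t, a <= s /\ t <= b /\ minimal_cover h u v s t /\ image_Icc_eq h s t u v.
Proof.
  intros img cu uv vd.
  destruct (proj2 (img u)) as [p [pab hpu]]; [unfold Icc; lra |].
  destruct (proj2 (img v)) as [q [qab hqv]]; [unfold Icc; lra |].
  unfold Icc in pab, qab.
  assert (cover : exists s t, Rmin p q <= s /\ t <= Rmax p q /\ minimal_cover h u v s t).
  { destruct (Rtotal_order p q) as [pq | [-> | qp]].
    - rewrite Rmin_left, Rmax_right by lra. apply minimal_cover_exists_lt; auto; lra.
    - lra.
    - rewrite Rmin_right, Rmax_left by lra.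
      destruct (minimal_cover_exists_lt q p v u) as (s & t & qs & tp & cover); try lra.
      exists s, t; split; [lra |]; split; [lra | now apply minimal_cover_sym]. }
  destruct cover as (s & t & ps & tq & cover).
  exists s, t; split; [| split; [| split; [exact cover | now apply minimal_cover_image]]].
  - pose proof (Rmin_glb p q a); lra.
  - pose proof (Rmax_lub p q b); lra.
Qed.

End MinimalCovers.

Definition splitting_witness (g : R -> R) (l r a b : R) : Prop :=
  0 <= a /\ a < b /\ b <= 1 /\
  (forall x, Icc a b x -> Icc l r x -> x = l \/ x = r) /\
  (forall y, (exists x, Icc a b x /\ g x = y) <-> (exists x, Icc l r x /\ g x = y)).

Definition splittable (g : R -> R) (l r : R) : Prop := exists a b, splitting_witness g l r a b.

Definition infinitely_often (P : nat -> Prop) : Prop :=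
  forall m, exists n, (m <= n)%nat /\ P n.

Lemma splitting_sequenceP g l r : splitting_sequence g l r <->
  tight g l r /\ infinitely_often (fun n => splittable g (l n) (r n)).
Proof.
  split.
  - intros [tight_lr [Nset [a [b [Nset_io witness]]]]]. split; [exact tight_lr |].
    intros m. destruct (Nset_io m) as [n [mn Nn]].
    exists n; split; [exact mn |]. exists (a n), (b n). exact (witness n Nn).
  - intros [tight_lr io]. split; [exact tight_lr |].
    destruct (choice (fun n (ab : R * R) => splittable g (l n) (r n) ->
                        splitting_witness g (l n) (r n) (fst ab) (snd ab))) as [ab witness].
    { intros n. destruct (classic (splittable g (l n) (r n))) as [[a [b hab]] | not_split].
      - now exists (a, b).
      - exists (0, 0). intros; contradiction. }
    exists (fun n => splittable g (l n) (r n)), (fun n => fst (ab n)), (fun n => snd (ab n)).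
    split; [exact io | exact witness].
Qed.

Lemma splittable_of_image g a b l r c d : 0 <= a -> a < b -> b <= 1 ->
  (forall x, Icc a b x -> Icc l r x -> x = l \/ x = r) ->
  image_Icc_eq g a b c d -> image_Icc_eq g l r c d -> splittable g l r.
Proof.
  intros a0 ab b1 touch S_img T_img.
  exists a, b; do 4 (split; [assumption |]).
  intros y; split; intros hy; [apply T_img, S_img, hy | apply S_img, T_img, hy].
Qed.

Lemma admits_splitting_sequence_ext f g : (forall x, Icc 0 1 x -> f x = g x) ->
  admits_splitting_sequence f <-> admits_splitting_sequence g.
Proof.
  assert (one_way : forall f g, (forall x, Icc 0 1 x -> f x = g x) ->
                      admits_splitting_sequence f -> admits_splitting_sequence g).
  { clear f g. intros f g fg [l [r seq]]. exists l, r.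
    apply splitting_sequenceP in seq as [[proper [img nondeg]] io].
    assert (on_T : forall n x, Icc (l n) (r n) x -> f x = g x).
    { intros n x hx. apply fg. destruct (proper n) as (? & ? & ? & _). unfold Icc in *; lra. }
    apply splitting_sequenceP; split; [split; [exact proper | split; [| exact nondeg]] |].
    - intros n y. rewrite <- (image_ext f g) by apply on_T. apply img.
    - intros m. destruct (io m) as [n [mn [a [b (a0 & ab & b1 & touch & same)]]]].
      exists n; split; [exact mn |]. exists a, b; do 4 (split; [assumption |]).
      assert (on_S : forall x, Icc a b x -> f x = g x).
      { intros x hx. apply fg. unfold Icc in *; lra. }
      intros y. rewrite <- (image_ext f g a b y on_S), <- (image_ext f g _ _ y (on_T n)).
      apply same. }
  intros fg; split; apply one_way; [exact fg |]. intros x hx; symmetry; auto.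
Qed.

Lemma splittable_comp f g l r : splittable f l r -> splittable (fun x => g (f x)) l r.
Proof.
  intros [a [b (a0 & ab & b1 & touch & same)]].
  exists a, b; do 4 (split; [assumption |]).
  intros y; split; intros [x [hx <-]].
  - destruct (proj1 (same (f x))) as [x' [hx' fx']]; [now exists x |].
    exists x'; split; [exact hx' | now rewrite fx'].
  - destruct (proj2 (same (f x))) as [x' [hx' fx']]; [now exists x |].
    exists x'; split; [exact hx' | now rewrite fx'].
Qed.

Lemma tight_comp_subseq f l r p : tight f l r ->
  tight (fun x => f (f x)) (fun k => l (2 * k + p)%nat) (fun k => r (2 * k + p)%nat).
Proof.
  intros [proper [img [N nondeg]]]. split; [| split].
  - intros k; apply proper.
  - intros k y. replace (2 * S k + p)%nat with (S (S (2 * k + p))) by lia.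
    rewrite (image_comp f f) by apply img. apply img.
  - exists N; intros k kN; apply nondeg; lia.
Qed.

Lemma infinitely_often_parity (P : nat -> Prop) : infinitely_often P ->
  exists p, infinitely_often (fun k => P (2 * k + p)%nat).
Proof.
  intros io.
  destruct (classic (infinitely_often (fun k => P (2 * k + 0)%nat))) as [even | not_even];
    [now exists 0%nat |].
  exists 1%nat; intros m.
  apply not_all_ex_not in not_even as [m0 no_even_after].
  destruct (io (2 * (m + m0) + 1)%nat) as [n [mn Pn]].
  destruct (Nat.Even_or_Odd n) as [[k ->] | [k ->]].
  - exfalso; apply no_even_after. exists k; split; [lia | now rewrite Nat.add_0_r].
  - exists k; split; [lia | exact Pn].
Qed.

Lemma admits_splitting_sequence_comp f :
  admits_splitting_sequence f -> admits_splitting_sequence (fun x => f (f x)).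
Proof.
  intros [l [r seq]]. apply splitting_sequenceP in seq as [tight_lr io].
  destruct (infinitely_often_parity _ io) as [p io_p].
  exists (fun k => l (2 * k + p)%nat), (fun k => r (2 * k + p)%nat).
  apply splitting_sequenceP; split; [now apply tight_comp_subseq |].
  intros m. destruct (io_p m) as [k [mk split_k]].
  exists k; split; [exact mk | now apply splittable_comp].
Qed.

Definition interleave (e o : nat -> R) (j : nat) : R :=
  if Nat.even j then e (Nat.div2 j) else o (Nat.div2 j).

Lemma interleave_even e o m : interleave e o (2 * m) = e m.
Proof. unfold interleave. now rewrite Nat.even_even, Nat.div2_double. Qed.

Lemma interleave_odd e o m : interleave e o (2 * m + 1) = o m.
Proof. unfold interleave. now rewrite Nat.even_odd, Nat.add_1_r, Nat.div2_succ_double. Qed.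

Lemma admits_splitting_sequence_interleave g (xl xr yl yr : nat -> R) :
  (forall m, proper_subinterval (xl m) (xr m) /\ xl m < xr m) ->
  (forall m, proper_subinterval (yl m) (yr m) /\ yl m < yr m) ->
  (forall m, image_Icc_eq g (yl m) (yr m) (xl m) (xr m)) ->
  (forall m, image_Icc_eq g (xl (S m)) (xr (S m)) (yl m) (yr m)) ->
  infinitely_often (fun m => splittable g (yl m) (yr m) \/ splittable g (xl (S m)) (xr (S m))) ->
  admits_splitting_sequence g.
Proof.
  intros X_ok Y_ok Y_img X_img io.
  assert (by_parity : forall P : nat -> Prop,
            (forall m, P (2 * m)%nat) -> (forall m, P (2 * m + 1)%nat) -> forall j, P j).
  { intros P P_even P_odd j. now destruct (Nat.Even_or_Odd j) as [[m ->] | [m ->]]. }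
  exists (interleave xl yl), (interleave xr yr).
  apply splitting_sequenceP; split; [split; [| split] |].
  - apply by_parity; intros m; rewrite ?interleave_even, ?interleave_odd;
      [apply X_ok | apply Y_ok].
  - apply by_parity; intros m.
    + rewrite <- Nat.add_1_r, !interleave_odd, !interleave_even. apply Y_img.
    + replace (S (2 * m + 1)) with (2 * S m)%nat by lia.
      rewrite !interleave_odd, !interleave_even. apply X_img.
  - exists 0%nat. intros j _; revert j.
    apply by_parity; intros m; rewrite ?interleave_even, ?interleave_odd;
      [apply X_ok | apply Y_ok].
  - intros M. destruct (io M) as [m [Mm [Y_split | X_split]]].
    + exists (2 * m + 1)%nat; split; [lia |]. now rewrite !interleave_odd.
    + exists (2 * S m)%nat; split; [lia |]. now rewrite !interleave_even.
Qed.

Lemma dependent_choice {A : Type} (Inv : nat -> A -> Prop) (Step : nat -> A -> A -> Prop) x0 :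
  Inv 0%nat x0 -> (forall n x, Inv n x -> exists y, Inv (S n) y /\ Step n x y) ->
  exists s : nat -> A, forall n, Inv n (s n) /\ Step n (s n) (s (S n)).
Proof.
  intros inv0 step.
  destruct (choice (fun (nx : nat * A) y =>
              Inv (fst nx) (snd nx) -> Inv (S (fst nx)) y /\ Step (fst nx) (snd nx) y))
    as [F F_step].
  { intros [n x]. destruct (classic (Inv n x)) as [inv | not_inv].
    - destruct (step n x inv) as [y hy]. now exists y.
    - exists x. intros; contradiction. }
  set (s := fix s (n : nat) : A := match n with O => x0 | S k => F (k, s k) end).
  assert (inv_s : forall n, Inv n (s n)).
  { induction n as [| n IH]; [exact inv0 | exact (proj1 (F_step (n, s n) IH))]. }
  exists s; intros n. split; [apply inv_s | exact (proj2 (F_step (n, s n) (inv_s n)))].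
Qed.

Section LiftThroughSquare.

Variable f : R -> R.
Hypothesis f_cont : continuity f.
Hypothesis f_surj : surj01 f.

Lemma splittable_transfer l' r' L R u v y1 y2 x1 x2 :
  image_Icc_eq (fun x => f (f x)) l' r' L R -> L <= u -> u < v -> v <= R ->
  minimal_cover f u v y1 y2 -> l' <= x1 -> x2 <= r' -> image_Icc_eq f x1 x2 y1 y2 ->
  splittable (fun x => f (f x)) l' r' -> splittable f y1 y2 \/ splittable f x1 x2.
Proof.
  intros T'_img Lu uv vR Y_cover l'x1 x2r' X_img [a [b (a0 & ab & b1 & S_touch & S_same)]].
  assert (S_img : image_Icc_eq (fun x => f (f x)) a b L R).
  { intros y. rewrite S_same. apply T'_img. }
  destruct (image_Icc_interval f f_cont a b) as [s1 [s2 [s12 fS_img]]]; [lra |].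
  destruct (image_Icc_eq_01 f a b s1 s2) as [s1_0 s2_1]; auto.
  assert (ffS_img : image_Icc_eq f s1 s2 L R).
  { intros y. rewrite <- (image_comp f f a b s1 s2 y fS_img). apply S_img. }
  destruct (minimal_cover_in_image f f_cont s1 s2 L R u v)
    as (k1 & k2 & s1k1 & k2s2 & K_cover & K_img); auto.
  pose proof (minimal_cover_image f f_cont u v y1 y2 uv Y_cover) as Y_img.
  destruct (minimal_covers_eq_or_touch f u v y1 y2 k1 k2 Y_cover K_cover)
    as [[-> ->] | touch].
  - right. destruct Y_cover as [y12 _].
    destruct (minimal_cover_in_image f f_cont a b s1 s2 y1 y2)
      as (x1' & x2' & ax1' & x2'b & [x12' _] & X'_img); auto.
    apply (splittable_of_image f x1' x2' x1 x2 y1 y2); try assumption; try lra.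
    intros x x_X' x_X. unfold Icc in *.
    destruct (S_touch x) as [-> | ->]; unfold Icc; lra.
  - left. destruct K_cover as [k12 _].
    apply (splittable_of_image f k1 k2 y1 y2 u v); try assumption; lra.
Qed.

Lemma lift_step l' r' L R u v :
  proper_subinterval l' r' -> proper_subinterval L R ->
  image_Icc_eq (fun x => f (f x)) l' r' L R -> L <= u -> u < v -> v <= R ->
  exists x1 x2 y1 y2, (l' <= x1 /\ x1 < x2 /\ x2 <= r') /\
    proper_subinterval y1 y2 /\ y1 < y2 /\
    image_Icc_eq f x1 x2 y1 y2 /\ image_Icc_eq f y1 y2 u v /\
    (splittable (fun x => f (f x)) l' r' -> splittable f y1 y2 \/ splittable f x1 x2).
Proof.
  intros (l'0 & l'r' & r'1 & _) LR_proper T'_img Lu uv vR.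
  destruct (image_Icc_interval f f_cont l' r' l'r') as [a1 [a2 [a12 A_img]]].
  destruct (image_Icc_eq_01 f l' r' a1 a2) as [a1_0 a2_1]; auto.
  assert (fA_img : image_Icc_eq f a1 a2 L R).
  { intros y. rewrite <- (image_comp f f l' r' a1 a2 y A_img). apply T'_img. }
  destruct (minimal_cover_in_image f f_cont a1 a2 L R u v fA_img Lu uv vR)
    as (y1 & y2 & a1y1 & y2a2 & Y_cover & Y_img).
  pose proof (proj1 Y_cover) as y12.
  destruct (minimal_cover_in_image f f_cont l' r' a1 a2 y1 y2 A_img)
    as (x1 & x2 & l'x1 & x2r' & [x12 _] & X_img); try lra.
  assert (Y_not_full : ~ (y1 = 0 /\ y2 = 1)).
  { intros [-> ->]. destruct LR_proper as (L0 & LR & R1 & not_full). apply not_full.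
    assert (in_uv : forall y, Icc 0 1 y -> Icc u v y).
    { intros y hy. apply Y_img, f_surj, hy. }
    destruct (in_uv 0), (in_uv 1); unfold Icc; lra. }
  exists x1, x2, y1, y2.
  split; [lra |]; split; [repeat split; lra |]; split; [exact y12 |].
  split; [exact X_img |]; split; [exact Y_img |].
  apply (splittable_transfer l' r' L R u v); assumption.
Qed.

Lemma admits_splitting_sequence_lift (l r : nat -> R) :
  (forall n, proper_subinterval (l n) (r n)) -> (forall n, l n < r n) ->
  (forall n, image_Icc_eq (fun x => f (f x)) (l (S n)) (r (S n)) (l n) (r n)) ->
  infinitely_often (fun n => splittable (fun x => f (f x)) (l n) (r n)) ->
  admits_splitting_sequence f.
Proof.
  intros proper nondeg img io.
  set (inside := fun n (X : R * R) => l n <= fst X /\ fst X < snd X /\ snd X <= r n).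
  set (lifts := fun n (X X' Y : R * R) =>
    proper_subinterval (fst Y) (snd Y) /\ fst Y < snd Y /\
    image_Icc_eq f (fst X') (snd X') (fst Y) (snd Y) /\
    image_Icc_eq f (fst Y) (snd Y) (fst X) (snd X) /\
    (splittable (fun x => f (f x)) (l (S n)) (r (S n)) ->
       splittable f (fst Y) (snd Y) \/ splittable f (fst X') (snd X'))).
  destruct (dependent_choice inside (fun n X X' => exists Y, lifts n X X' Y) (l 0%nat, r 0%nat))
    as [xs xs_ok].
  { unfold inside; simpl. pose proof (nondeg 0%nat). lra. }
  { intros n [u v] (lu & uv & vr); simpl in *.
    destruct (lift_step (l (S n)) (r (S n)) (l n) (r n) u v) as (x1 & x2 & y1 & y2 & X_in & Y_lifts);
      auto.
    exists (x1, x2); split; [exact X_in | now exists (y1, y2)]. }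
  destruct (choice (fun m Y => lifts m (xs m) (xs (S m)) Y)) as [ys ys_ok];
    [intros m; apply xs_ok |].
  apply (admits_splitting_sequence_interleave f (fun m => fst (xs m)) (fun m => snd (xs m))
           (fun m => fst (ys m)) (fun m => snd (ys m))).
  - intros m. destruct (xs_ok m) as [(lx & x12 & xr) _].
    split; [apply (proper_subinterval_sub (l m) (r m)); auto; lra | exact x12].
  - intros m. destruct (ys_ok m) as (Y_proper & y12 & _). now split.
  - intros m. apply (ys_ok m).
  - intros m. apply (ys_ok m).
  - intros M. destruct (io (S M)) as [[| m] [Mn split]]; [lia |].
    exists m; split; [lia |]. now apply (ys_ok m).
Qed.

Lemma admits_splitting_sequence_of_comp :
  admits_splitting_sequence (fun x => f (f x)) -> admits_splitting_sequence f.
Proof.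
  intros [l [r seq]]. apply splitting_sequenceP in seq as [[proper [img [N nondeg]]] io].
  apply (admits_splitting_sequence_lift (fun n => l (N + n)%nat) (fun n => r (N + n)%nat)).
  - intros n; apply proper.
  - intros n; apply nondeg; lia.
  - intros n; simpl. rewrite Nat.add_succ_r. apply img.
  - intros m. destruct (io (N + m)%nat) as [n [mn split]].
    exists (n - N)%nat; split; [lia |]. now replace (N + (n - N))%nat with n by lia.
Qed.

End LiftThroughSquare.

Definition clamp (x : R) : R := Rmax 0 (Rmin 1 x).

Lemma clamp_01 x : Icc 0 1 (clamp x).
Proof. unfold Icc, clamp, Rmax, Rmin; repeat destruct Rle_dec; lra. Qed.

Lemma clamp_id x : Icc 0 1 x -> clamp x = x.
Proof. unfold Icc, clamp, Rmax, Rmin; intros; repeat destruct Rle_dec; lra. Qed.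

Lemma clamp_lipschitz x y : Rabs (clamp y - clamp x) <= Rabs (y - x).
Proof.
  unfold clamp, Rmax, Rmin; repeat destruct Rle_dec; unfold Rabs; repeat destruct Rcase_abs; lra.
Qed.

Lemma continuity_clamp_comp f : cont01 f -> continuity (fun x => f (clamp x)).
Proof.
  intros f_cont x eps eps_pos.
  destruct (f_cont (clamp x) (clamp_01 x) eps eps_pos) as [delta [delta_pos near]].
  exists delta; split; [exact delta_pos |].
  intros y [_ yx]. simpl in *; unfold R_dist in *.
  apply near; [apply clamp_01 |]. pose proof (clamp_lipschitz x y). lra.
Qed.

Theorem lemma3p15 (f : R -> R) (hc : cont01 f) (hs : surj01 f) :
  admits_splitting_sequence f <-> admits_splitting_sequence (fun x => f (f x)).
Proof.
  (* The intermediate value theorems of the standard library need continuity on all of R. *)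
  set (g := fun x => f (clamp x)).
  assert (f_g : forall x, Icc 0 1 x -> f x = g x) by (intros x hx; unfold g; now rewrite clamp_id).
  assert (f01 : forall x, Icc 0 1 x -> Icc 0 1 (f x)) by (intros x hx; apply hs; now exists x).
  assert (ff_gg : forall x, Icc 0 1 x -> f (f x) = g (g x)) 
    by (intros x hx; rewrite <- (f_g x hx); apply f_g, f01, hx).
  assert (g_surj : surj01 g) by (intros y; rewrite <- (image_ext f g) by exact f_g; apply hs).
  rewrite (admits_splitting_sequence_ext f g f_g),
    (admits_splitting_sequence_ext (fun x => f (f x)) (fun x => g (g x)) ff_gg).
  split; [apply admits_splitting_sequence_comp |].
  apply admits_splitting_sequence_of_comp; [apply continuity_clamp_comp |]; assumption.
Qed.
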